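(* Let $N$ be a well-formed system (coherent and $\vdash N:\mathbf{ok}$) in the calculus with multiset entry policies. If $N\to N'$, then $N'$ is well-formed; in particular $\vdash N':\mathbf{ok}$.
   Context: Fix disjoint sets $\mathsf{Act}$ (actions) and $\mathsf{Loc}$ (localities). A policy is a multiset over $\mathsf{Act}\cup\mathsf{Loc}$ with finite support and multiplicities in $\mathbb{N}\cup\{\omega\}$; $\cup$ denotes multiset union (multiplicities add, $\omega$ absorbing), $T_1\ \mathtt{enforces}\ T_2$ means multiset inclusion $T_1\subseteq T_2$ (pointwise $\le$), and $T^\omega$ is the multiset giving multiplicity $\omega$ to every element of the support of $T$. Agents: $P ::= \mathbf{nil} \mid a.P \mid \mathbf{go}_T\, l.P \mid P\,|\,Q \mid\ !P$ ($T$ a policy). Systems: $N ::= \mathbf{0} \mid l[\![M \rhd P]\!] \mid N_1\parallel N_2$, site names pairwise distinct, $M^l$ the membrane of $l$. A membrane is $M=(M_t,M_p)$ with $M_t$ a partial function $\mathsf{Loc}\to\{\mathtt{loc},\mathtt{lgood},\mathtt{lbad}\}$ and $M_p$ a policy. The judgement $\vdash P:T$ is the least relation with: $\vdash\mathbf{nil}:T$; $\vdash a.P:T\cup\{a\}$ if $\vdash P:T$; $\vdash\mathbf{go}_{T'}\,l.P:T\cup\{l\}$ if $\vdash P:T'$; $\vdash P|Q:T_1\cup T_2$ if $\vdash P:T_1$ and $\vdash Q:T_2$; $\vdash\ !P:T'$ if $\vdash P:T$ and $T^\omega\subseteq T'$. Structural equivalence $\equiv$: least congruence on systems such that inside a site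 $|$ is commutative, associative with unit $\mathbf{nil}$, $l[\![M\rhd\ !P|Q]\!]\equiv l[\![M\rhd P|!P|Q]\!]$, and $\parallel$ is commutative, associative with unit $\mathbf{0}$. Reduction: (act) $l[\![M\rhd a.P|Q]\!]\to l[\![M\rhd P|Q]\!]$; (par) $N_1\to N_1'$ implies $N_1\parallel N_2\to N_1'\parallel N_2$; (struct) $N\equiv N_1\to N_1'\equiv N'$ implies $N\to N'$; (mig) $k[\![M^k\rhd\mathbf{go}_T\,l.P|Q]\!]\parallel l[\![M^l\rhd R]\!]\to k[\![M^k\rhd Q]\!]\parallel l[\![M^l\rhd P|R]\!]$ provided: if $M^l_t(k)=\mathtt{lgood}$ then $T\subseteq M^l_p$, else $\vdash P:M^l_p$. Trust order $<:$ reflexive with $\mathtt{loc}<:\mathtt{lbad}$, $\mathtt{loc}<:\mathtt{lgood}$. Site $k$ trustworthy iff $M^k_t(k)=\mathtt{lgood}$. $N$ coherent iff for every trustworthy $k$ and site $l$ with $M^k_t(l)$ defined, $M^k_t(l)<:M^l_t(l)$. An agent is a thread if it is not of the form $P_1|P_2$; every agent can be written $P_1|\dots|P_n$ ($n\ge1$) with each $P_i$ a thread. $\vdash N:\mathbf{ok}$: $\vdash\mathbf{0}:\mathbf{ok}$; $\vdash N_1\parallel N_2:\mathbf{ok}$ if both components are; $\vdash l[\![M\rhd P_1|\dots|P_n]\!]:\mathbf{ok}$ if $l$ trustworthy, each $P_i$ is a thread and $\vdash P_i:M_p$ for all $i$; $\vdash l[\![M\rhd P]\!]:\mathbf{ok}$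 if $l$ not trustworthy. *)

From Stdlib Require Import List ClassicalDescription.
Import ListNotations.
Set Implicit Arguments.

Inductive mult : Type := MFin (n : nat) | MOmega.

Definition madd (a b : mult) : mult :=
  match a, b with
  | MFin m, MFin n => MFin (m + n)
  | _, _ => MOmega
  end.

Definition mle (a b : mult) : Prop :=
  match a, b with
  | MFin m, MFin n => m <= n
  | _, MOmega => True
  | MOmega, MFin _ => False
  end.

Section Calculus.
Variables Act Loc : Type.

(* Act and Loc are disjoint: elements of policies live in the sum type. *)
Definition elt := (Act + Loc)%type.

Record policy := Policy {
  pol :> elt -> mult;
  pol_fin : exists s : list elt, forall x, pol x <> MFin 0 -> In x s
}.

Lemma madd_nz a b : madd a b <> MFin 0 -> a <> MFin 0 \/ b <> MFin 0.
Proof.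
  destruct a as [m|], b as [n|]; simpl; intro H;
    try (left; discriminate); try (right; discriminate).
  destruct m; [right; exact H | left; discriminate].
Qed.

Definition punion (T1 T2 : policy) : policy.
Proof.
  refine (@Policy (fun x => madd (T1 x) (T2 x)) _).
  destruct (pol_fin T1) as [s1 H1], (pol_fin T2) as [s2 H2].
  exists (s1 ++ s2). intros x Hx. apply in_or_app.
  destruct (madd_nz _ _ Hx); [left; auto | right; auto].
Defined.

Definition psing (e : elt) : policy.
Proof.
  refine (@Policy (fun x => if excluded_middle_informative (x = e) then MFin 1 else MFin 0) _).
  exists [e]. intros x. destruct (excluded_middle_informative (x = e)) as [E|E].
  - intros _. left. auto.
  - intros H. exfalso. apply H. reflexivity.
Defined.

Definition enforces (T1 T2 : policy) : Prop := forall x, mle (T1 x) (T2 x).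

Definition pomega (T : policy) : policy.
Proof.
  refine (@Policy (fun x => match T x with MFin 0 => MFin 0 | _ => MOmega end) _).
  destruct (pol_fin T) as [s H]. exists s. intros x Hx. apply H.
  intro E. apply Hx. rewrite E. reflexivity.
Defined.

Inductive agent : Type :=
  | ANil : agent
  | APre : Act -> agent -> agent
  | AGo : policy -> Loc -> agent -> agent
  | APar : agent -> agent -> agent
  | ABang : agent -> agent.

Inductive trust : Type := tloc | lgood | lbad.

Definition trust_le (t1 t2 : trust) : Prop :=
  t1 = t2 \/ (t1 = tloc /\ (t2 = lbad \/ t2 = lgood)).

Record membrane := Membrane {
  mt : Loc -> option trust;
  mp : policy
}.

Inductive system : Type :=
  | SZero : system
  | SSite : Loc -> membrane -> agent -> system
  | SPar : system -> system -> system.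

Fixpoint sites (N : system) : list Loc :=
  match N with
  | SZero => []
  | SSite l _ _ => [l]
  | SPar N1 N2 => sites N1 ++ sites N2
  end.

Definition distinct_sites (N : system) : Prop := NoDup (sites N).

Fixpoint has_site (N : system) (l : Loc) (M : membrane) : Prop :=
  match N with
  | SZero => False
  | SSite l' M' _ => l' = l /\ M' = M
  | SPar N1 N2 => has_site N1 l M \/ has_site N2 l M
  end.

Inductive typing : agent -> policy -> Prop :=
  | ty_nil T : typing ANil T
  | ty_act a P T : typing P T -> typing (APre a P) (punion T (psing (inl a)))
  | ty_go T' l P T : typing P T' -> typing (AGo T' l P) (punion T (psing (inr l)))
  | ty_par P Q T1 T2 : typing P T1 -> typing Q T2 -> typing (APar P Q) (punion T1 T2)
  | ty_bang P T T' : typing P T -> enforces (pomega T) T' -> typing (ABang P) T'.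

Inductive aeq : agent -> agent -> Prop :=
  | aeq_refl P : aeq P P
  | aeq_sym P Q : aeq P Q -> aeq Q P
  | aeq_trans P Q R : aeq P Q -> aeq Q R -> aeq P R
  | aeq_par P P' Q Q' : aeq P P' -> aeq Q Q' -> aeq (APar P Q) (APar P' Q')
  | aeq_comm P Q : aeq (APar P Q) (APar Q P)
  | aeq_assoc P Q R : aeq (APar (APar P Q) R) (APar P (APar Q R))
  | aeq_unit P : aeq (APar P ANil) P
  | aeq_bang P Q : aeq (APar (ABang P) Q) (APar P (APar (ABang P) Q)).

Inductive seq : system -> system -> Prop :=
  | seq_refl N : seq N N
  | seq_sym N1 N2 : seq N1 N2 -> seq N2 N1
  | seq_trans N1 N2 N3 : seq N1 N2 -> seq N2 N3 -> seq N1 N3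
  | seq_site l M P Q : aeq P Q -> seq (SSite l M P) (SSite l M Q)
  | seq_par N1 N1' N2 N2' : seq N1 N1' -> seq N2 N2' -> seq (SPar N1 N2) (SPar N1' N2')
  | seq_comm N1 N2 : seq (SPar N1 N2) (SPar N2 N1)
  | seq_assoc N1 N2 N3 : seq (SPar (SPar N1 N2) N3) (SPar N1 (SPar N2 N3))
  | seq_unit N : seq (SPar N SZero) N.

Definition mig_ok (Ml : membrane) (k : Loc) (T : policy) (P : agent) : Prop :=
  (mt Ml k = Some lgood /\ enforces T (mp Ml)) \/
  (mt Ml k <> Some lgood /\ typing P (mp Ml)).

Inductive red : system -> system -> Prop :=
  | red_act l M a P Q :
      red (SSite l M (APar (APre a P) Q)) (SSite l M (APar P Q))
  | red_par N1 N1' N2 : red N1 N1' -> red (SPar N1 N2) (SPar N1' N2)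
  | red_struct N N1 N1' N' : seq N N1 -> red N1 N1' -> seq N1' N' -> red N N'
  | red_mig k Mk T l P Q Ml R :
      mig_ok Ml k T P ->
      red (SPar (SSite k Mk (APar (AGo T l P) Q)) (SSite l Ml R))
          (SPar (SSite k Mk Q) (SSite l Ml (APar P R))).

Definition trustworthy (M : membrane) (k : Loc) : Prop := mt M k = Some lgood.

Definition coherent (N : system) : Prop :=
  forall k Mk, has_site N k Mk -> trustworthy Mk k ->
  forall l Ml, has_site N l Ml ->
  forall t, mt Mk l = Some t ->
  exists t', mt Ml l = Some t' /\ trust_le t t'.

Fixpoint threads (P : agent) : list agent :=
  match P with
  | APar P1 P2 => threads P1 ++ threads P2
  | _ => [P]
  end.

Fixpoint ok (N : system) : Prop :=
  match N with
  | SZero => True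
  | SPar N1 N2 => ok N1 /\ ok N2
  | SSite l M P => trustworthy M l -> forall Q, In Q (threads P) -> typing Q (mp M)
  end.

End Calculus.

Arguments ANil {Act Loc}.
Arguments SZero {Act Loc}.

(* Reduction neither creates sites nor changes membranes, so coherence of N'
   is inherited from N.  For [ok], typing is monotone in the policy, and the
   property "every thread is typed by T" is invariant under structural
   equivalence (unfolding [!P] is covered by [T^omega]).  An action step only
   removes a prefix, which shrinks the type.  A migration into a trustworthy
   site [l] either type-checks the migrating agent against [M^l_p] directly, or
   [M^l_t(k) = lgood]; coherence then forces [M^k_t(k) = lgood], so the thread
   [go_T l.P] is typed in [k], which gives [P : T] and [T] enforces [M^l_p]. *)
From Pilot Require Import Defs.
From Stdlib Require Import List Lia FunctionalExtensionality ProofIrrelevance.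
Set Implicit Arguments.

Lemma mle_trans a b c : mle a b -> mle b c -> mle a c.
Proof. destruct a, b, c; simpl; intros; auto; try lia; contradiction. Qed.

Section Policies.
Variables Act Loc : Type.
Implicit Types A B T : policy Act Loc.

Lemma policy_ext A B : (forall x, A x = B x) -> A = B.
Proof.
  destruct A as [fa pa], B as [fb pb]; simpl; intros H.
  assert (fa = fb) by (apply functional_extensionality; auto); subst.
  f_equal; apply proof_irrelevance.
Qed.

Lemma enforces_trans A B T : enforces A B -> enforces B T -> enforces A T.
Proof. intros HAB HBT x; eapply mle_trans; eauto. Qed.

Lemma punion_comm A B : punion A B = punion B A.
Proof.
  apply policy_ext; intro x; simpl.
  destruct (A x), (B x); simpl; auto; f_equal; lia.
Qed.

Lemma enforces_unionl A B : enforces A (punion A B).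
Proof. intro x; simpl; destruct (A x), (B x); simpl; auto; lia. Qed.

Lemma enforces_unionr A B : enforces B (punion A B).
Proof. rewrite punion_comm; apply enforces_unionl. Qed.

Lemma enforces_omega A : enforces A (pomega A).
Proof. intro x; simpl; destruct (A x) as [[|n]|]; simpl; auto. Qed.

(* Truncated difference, with [omega - b = omega]: exactly what lets
   [punion A B] enforcing [T] be split as [T = punion A (pdiff T A)]. *)
Definition mdiff (a b : mult) : mult :=
  match a, b with
  | MFin n, MFin m => MFin (n - m)
  | MOmega, _ => MOmega
  | MFin _, MOmega => MFin 0
  end.

Definition pdiff A B : policy Act Loc.
Proof.
  refine (@Policy Act Loc (fun x => mdiff (A x) (B x)) _).
  destruct (pol_fin A) as [s H]; exists s; intros x Hx; apply H.
  intro E; apply Hx; rewrite E; destruct (B x); reflexivity.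
Defined.

Lemma enforces_union_split A B T :
  enforces (punion A B) T -> enforces B (pdiff T A) /\ T = punion A (pdiff T A).
Proof.
  intros H; split.
  - intro x; specialize (H x); simpl in *.
    destruct (A x), (B x), (T x); simpl in *; auto; try lia; contradiction.
  - apply policy_ext; intro x; specialize (H x); simpl in *.
    destruct (A x), (B x), (T x); simpl in *; auto; try contradiction.
    f_equal; lia.
Qed.

End Policies.

Section Agents.
Variables Act Loc : Type.
Implicit Types (P Q : agent Act Loc) (T : policy Act Loc).

Lemma typing_weaken P T T' : typing P T -> enforces T T' -> typing P T'.
Proof.
  intros HP; revert T'; induction HP; intros T0 HE.
  - constructor.
  - rewrite punion_comm in HE; destruct (enforces_union_split HE) as [HB ->].
    rewrite punion_comm; constructor; auto.
  - rewrite punion_comm in HE; destruct (enforces_union_split HE) as [HB ->].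
    rewrite punion_comm; constructor; auto.
  - destruct (enforces_union_split HE) as [HB ->]; constructor; auto.
  - econstructor; eauto; eapply enforces_trans; eauto.
Qed.

Definition threads_typed T P := forall R, In R (threads P) -> typing R T.

Lemma threads_typed_par T P Q :
  threads_typed T (APar P Q) <-> threads_typed T P /\ threads_typed T Q.
Proof.
  unfold threads_typed; simpl; split.
  - intros H; split; intros R HR; apply H, in_or_app; auto.
  - intros [HP HQ] R HR; apply in_app_or in HR; destruct HR; auto.
Qed.

Lemma threads_typed_thread T P : (forall P1 P2, P <> APar P1 P2) ->
  threads_typed T P <-> typing P T.
Proof.
  unfold threads_typed; intros Hthread; destruct P; simpl;
    try (split; [intros H; apply H; left; reflexivity
                |intros H R [<-|[]]; exact H]).
  destruct (Hthread _ _ eq_refl).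
Qed.

Lemma typing_threads_typed P T : typing P T -> threads_typed T P.
Proof.
  induction 1; try (apply threads_typed_thread; [discriminate|econstructor; eauto]).
  apply threads_typed_par; split; intros R HR.
  - eapply typing_weaken; [apply IHtyping1; auto | apply enforces_unionl].
  - eapply typing_weaken; [apply IHtyping2; auto | apply enforces_unionr].
Qed.

Lemma typing_bang_threads_typed P T : typing (ABang P) T -> threads_typed T P.
Proof.
  inversion 1; subst; intros R HR.
  eapply typing_weaken; [eapply typing_threads_typed; eauto|].
  eapply enforces_trans; [apply enforces_omega|eauto].
Qed.

Lemma typing_pre_threads_typed a P T : typing (APre a P) T -> threads_typed T P.
Proof.
  inversion 1; subst; intros R HR.
  eapply typing_weaken; [eapply typing_threads_typed; eauto | apply enforces_unionl].
Qed.

Lemma typing_go_threads_typed T' l P T : typing (AGo T' l P) T -> threads_typed T' P.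
Proof. inversion 1; subst; apply typing_threads_typed; auto. Qed.

Lemma aeq_threads_typed P Q T : aeq P Q -> (threads_typed T P <-> threads_typed T Q).
Proof.
  induction 1; rewrite ?threads_typed_par; try tauto.
  - assert (threads_typed T ANil) by (intros R [<-|[]]; constructor); tauto.
  - assert (Hbang : threads_typed T (ABang P) <-> typing (ABang P) T)
      by (apply threads_typed_thread; discriminate).
    pose proof (@typing_bang_threads_typed P T); tauto.
Qed.

End Agents.

Section Systems.
Variables Act Loc : Type.
Implicit Types N : system Act Loc.

Lemma ok_site (l : Loc) (M : membrane Act Loc) (P : agent Act Loc) :
  ok (SSite l M P) <-> (trustworthy M l -> threads_typed (mp M) P).
Proof. reflexivity. Qed.

Lemma seq_ok N1 N2 : Defs.seq N1 N2 -> (ok N1 <-> ok N2).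
Proof.
  induction 1; try (simpl; tauto).
  rewrite !ok_site, (aeq_threads_typed (mp M) H); tauto.
Qed.

Lemma seq_has_site N1 N2 l M : Defs.seq N1 N2 -> (has_site N1 l M <-> has_site N2 l M).
Proof. induction 1; simpl; tauto. Qed.

Lemma red_has_site N N' l M : red N N' -> has_site N' l M -> has_site N l M.
Proof.
  intros Hred; revert l M; induction Hred; simpl; intros l0 M0 Hs; auto.
  - destruct Hs; auto.
  - apply (seq_has_site _ _ H), IHHred, (seq_has_site _ _ H0), Hs.
Qed.

Lemma coherent_site_subset N N' :
  (forall l M, has_site N' l M -> has_site N l M) -> coherent N -> coherent N'.
Proof.
  intros Hsub Hc k Mk Hk Htk l Ml Hl; exact (Hc k Mk (Hsub _ _ Hk) Htk l Ml (Hsub _ _ Hl)).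
Qed.

Lemma coherent_lgood_trustworthy N k Mk l Ml :
  coherent N -> has_site N k Mk -> has_site N l Ml ->
  trustworthy Ml l -> mt Ml k = Some lgood -> trustworthy Mk k.
Proof.
  intros Hc Hk Hl Htl Hlk.
  destruct (Hc l Ml Hl Htl k Mk Hk lgood Hlk) as [t [Ht [<-|[Hloc _]]]];
    [exact Ht | discriminate].
Qed.

Lemma red_ok N N' : red N N' -> coherent N -> ok N -> ok N'.
Proof.
  induction 1 as [l M a P Q | N1 N1' N2 Hred IH | N N1 N1' N' H1 Hred IH H2
                 | k Mk T l P Q Ml R Hmig]; intros Hc Hok.
  - rewrite ok_site in *; intros Ht; specialize (Hok Ht).
    apply threads_typed_par in Hok as [HaP HQ].
    apply threads_typed_par; split; auto.
    apply threads_typed_thread in HaP; [|discriminate].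
    eapply typing_pre_threads_typed; eauto.
  - simpl in *; destruct Hok; split; auto.
    apply IH; auto; eapply coherent_site_subset; [|eauto]; simpl; auto.
  - apply (seq_ok H2), IH; [|apply (seq_ok H1); auto].
    eapply coherent_site_subset; [|eauto]; intros; apply (seq_has_site _ _ H1); auto.
  - destruct Hok as [Hk Hl]; rewrite ok_site in *; split.
    + intros Ht; apply threads_typed_par in Hk as [_ HQ]; auto.
    + intros Ht; apply threads_typed_par; split; auto.
      destruct Hmig as [[Hlgood HT]|[_ HP]]; [|apply typing_threads_typed; auto].
      assert (Htk : trustworthy Mk k)
        by (eapply coherent_lgood_trustworthy with (l := l) (Ml := Ml);
            [exact Hc | simpl; intuition ..]).
      apply threads_typed_par in Hk as [Hgo _]; auto.
      apply threads_typed_thread, typing_go_threads_typed in Hgo; [|discriminate].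
      intros R' HR; eapply typing_weaken; eauto.
Qed.

End Systems.

(* Site names need not be distinct: coherence and [ok] quantify over every
   site occurrence. *)
Theorem mainTheorem4 (Act Loc : Type) (N N' : system Act Loc) :
  distinct_sites N -> coherent N -> ok N -> red N N' ->
  coherent N' /\ ok N'.
Proof.
  intros _ Hc Hok Hred; split.
  - eapply coherent_site_subset; [intros; eapply red_has_site|]; eauto.
  - eapply red_ok; eauto.
Qed.
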